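(* Let $R$ be a ring such that $\big[[R,R],[R,R]^2\big]=\{0\}$. Then the commutator ideal of $R$ (the two-sided ideal generated by all commutators $[x,y]$, $x,y\in R$) is nil, i.e. each of its elements is nilpotent.
   Context: Rings are associative, not necessarily unital. For $x,y\in R$, $[x,y]=xy-yx$. For subsets $X,Y\subseteq R$, $[X,Y]$ denotes the additive subgroup generated by all $[x,y]$ with $x\in X$, $y\in Y$; $XY$ denotes the additive subgroup generated by all products $xy$; and $X^2=XX$. *)

(* MathComp rings are unital, so a (possibly non-unital)
   associative ring is modelled as an abelian group (zmodType) with a
   multiplication satisfying associativity and both distributive laws. *)
From mathcomp Require Import all_boot all_algebra.
Set Implicit Arguments. Unset Strict Implicit. Unset Printing Implicit Defensive.
Import GRing.Theory.
Local Open Scope ring_scope.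

Record is_rng (R : zmodType) (mul : R -> R -> R) : Prop := IsRng {
  rng_mulA : forall x y z, mul x (mul y z) = mul (mul x y) z;
  rng_mulDl : forall x y z, mul (x + y) z = mul x z + mul y z;
  rng_mulDr : forall x y z, mul x (y + z) = mul x y + mul x z
}.

Section Rng.
Variables (R : zmodType) (mul : R -> R -> R).

Definition comm_r (x y : R) : R := mul x y - mul y x.

Inductive addsubgrp (S : R -> Prop) : R -> Prop :=
  | asg_gen x : S x -> addsubgrp S x
  | asg_0 : addsubgrp S 0
  | asg_sub x y : addsubgrp S x -> addsubgrp S y -> addsubgrp S (x - y).

Definition commS (X Y : R -> Prop) : R -> Prop :=
  addsubgrp (fun z => exists x y, X x /\ Y y /\ z = comm_r x y).

Definition prodS (X Y : R -> Prop) : R -> Prop :=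
  addsubgrp (fun z => exists x y, X x /\ Y y /\ z = mul x y).

Definition allR : R -> Prop := fun _ => True.

Inductive ideal_gen (S : R -> Prop) : R -> Prop :=
  | ig_gen x : S x -> ideal_gen S x
  | ig_0 : ideal_gen S 0
  | ig_sub x y : ideal_gen S x -> ideal_gen S y -> ideal_gen S (x - y)
  | ig_mull r x : ideal_gen S x -> ideal_gen S (mul r x)
  | ig_mulr x r : ideal_gen S x -> ideal_gen S (mul x r).

Definition comm_ideal : R -> Prop :=
  ideal_gen (fun z => exists x y, z = comm_r x y).

(* npow x n = x^(n+1) = x * x * ... * x  (n+1 factors) *)
Fixpoint npow (x : R) (n : nat) : R :=
  match n with 0 => x | n'.+1 => mul x (npow x n') end.

Definition nilpotent_r (x : R) : Prop := exists n, npow x n = 0.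

End Rng.

From mathcomp Require Import all_boot all_algebra.
Local Open Scope ring_scope.
From mathcomp Require Import zify.
Set Implicit Arguments. Unset Strict Implicit. Unset Printing Implicit Defensive.
Import GRing.Theory.

(* Let u = [a, b].  The hypothesis says that every commutator commutes with every
   product P of two commutators.  Applied to [a, a w] = a [a, w] this gives
   [a, P] [a, w] = 0, and expanding commutators of products (for P = u^2, u (u b),
   and with b in place of a) yields u^4 = 0 and u^2 g u^2 = 0.  Since u commutes
   with u [x, u y], we get u x u y u = u^2 ([x, u y] + y x u), so the cube of the
   ideal generated by u lies in the ideal generated by u^2, whose square is zero.
   The commutator ideal is a sum of these nilpotent principal ideals, and a sum of
   two nil ideals I + J is nil because (i + j)^n - i^n lies in J. *)

Section Rng.
Variables (R : zmodType) (mul : R -> R -> R).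
Hypothesis Hr : is_rng mul.

Local Notation "x * y" := (mul x y) : ring_scope.
(* [comm_r] unfolds during matching ([u * u] matches [x * (y - z)]), hence the
   explicitly instantiated rewrite rules below. *)
Local Notation "[ x , y ]" := (comm_r mul x y).
Local Notation mulA := (rng_mulA Hr).
Local Notation mulDl := (rng_mulDl Hr).
Local Notation mulDr := (rng_mulDr Hr).

Lemma rng_mul0l x : 0 * x = 0.
Proof. by apply: (addIr (0 * x)); rewrite -mulDl !add0r. Qed.

Lemma rng_mul0r x : x * 0 = 0.
Proof. by apply: (addIr (x * 0)); rewrite -mulDr !add0r. Qed.

Lemma rng_mulNl x y : - x * y = - (x * y).
Proof. by apply/eqP; rewrite -subr_eq0 opprK -mulDl addNr rng_mul0l. Qed.

Lemma rng_mulNr x y : x * - y = - (x * y).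
Proof. by apply/eqP; rewrite -subr_eq0 opprK -mulDr addNr rng_mul0r. Qed.

Lemma rng_mulBl x y z : (x - y) * z = x * z - y * z.
Proof. by rewrite mulDl rng_mulNl. Qed.

Lemma rng_mulBr x y z : x * (y - z) = x * y - x * z.
Proof. by rewrite mulDr rng_mulNr. Qed.

Lemma comm_refl x : [x, x] = 0.
Proof. exact: subrr. Qed.

Lemma comm_anti x y : [y, x] = - [x, y].
Proof. by rewrite /comm_r opprB. Qed.

Lemma commMr a x y : [a, x * y] = [a, x] * y + x * [a, y].
Proof. by rewrite /comm_r rng_mulBl rng_mulBr !mulA addrA subrK. Qed.

Lemma commMl x y z : [x * y, z] = x * [y, z] + [x, z] * y.
Proof. by rewrite /comm_r rng_mulBl rng_mulBr !mulA addrA subrK. Qed.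

Lemma npow_add x m n : npow mul x m * npow mul x n = npow mul x (m + n).+1.
Proof. by elim: m => [|m IH] //=; rewrite -mulA IH. Qed.

Lemma npow_npow x m n : npow mul (npow mul x m) n = npow mul x (m * n + m + n).
Proof.
elim: n => [|n IH] /=; first by rewrite muln0 addn0.
by rewrite IH npow_add; congr npow; lia.
Qed.

Record is_ideal (J : R -> Prop) : Prop := IsIdeal {
  ideal0 : J 0;
  idealB : forall x y, J x -> J y -> J (x - y);
  idealMl : forall r x, J x -> J (r * x);
  idealMr : forall x r, J x -> J (x * r)
}.

Lemma idealN J x : is_ideal J -> J x -> J (- x).
Proof. by move=> idJ Jx; rewrite -sub0r; apply: idealB (ideal0 idJ) Jx. Qed.

Lemma idealD J x y : is_ideal J -> J x -> J y -> J (x + y).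
Proof. by move=> idJ Jx Jy; rewrite -[y]opprK; apply: idealB (idealN idJ Jy). Qed.

Lemma zero_ideal : is_ideal (fun x => x = 0).
Proof.
split=> // [x y -> ->|r x ->|x r ->]; by rewrite ?subrr ?rng_mul0r ?rng_mul0l.
Qed.

Lemma ideal_gen_ideal S : is_ideal (ideal_gen mul S).
Proof. by split; [exact: ig_0 | exact: ig_sub | exact: ig_mull | exact: ig_mulr]. Qed.

Lemma ideal_gen_min S J : is_ideal J -> (forall s, S s -> J s) ->
  forall z, ideal_gen mul S z -> J z.
Proof.
move=> idJ SJ z; elim=> [s /SJ //| |x y _ Jx _ Jy|r x _ Jx|x r _ Jx].
- exact: ideal0.
- exact: idealB.
- exact: idealMl.
- exact: idealMr.
Qed.

Lemma ideal_npowB J x y n : is_ideal J -> J (x - y) -> J (npow mul x n - npow mul y n).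
Proof.
move=> idJ Jxy; elim: n => [//|n IH] /=.
have -> : x * npow mul x n - y * npow mul y n
          = x * (npow mul x n - npow mul y n) + (x - y) * npow mul y n.
  by rewrite rng_mulBr rng_mulBl addrA subrK.
by apply: idealD => //; [apply: idealMl | apply: idealMr].
Qed.

Definition ideal_add (I J : R -> Prop) z := exists i j, [/\ I i, J j & z = i + j].

Lemma ideal_add_ideal I J : is_ideal I -> is_ideal J -> is_ideal (ideal_add I J).
Proof.
move=> idI idJ; split.
- by exists 0, 0; rewrite addr0; split=> //; exact: ideal0.
- move=> _ _ [i1 [j1 [Ii1 Jj1 ->]]] [i2 [j2 [Ii2 Jj2 ->]]].
  exists (i1 - i2), (j1 - j2); split; [exact: idealB | exact: idealB |].
  by rewrite opprD addrACA.
- move=> r _ [i [j [Ii Jj ->]]]; exists (r * i), (r * j).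
  by rewrite mulDr; split; [exact: idealMl | exact: idealMl |].
- move=> _ r [i [j [Ii Jj ->]]]; exists (i * r), (j * r).
  by rewrite mulDl; split; [exact: idealMr | exact: idealMr |].
Qed.

Lemma nil_ideal_add I J : is_ideal J ->
  (forall x, I x -> nilpotent_r mul x) -> (forall x, J x -> nilpotent_r mul x) ->
  forall z, ideal_add I J z -> nilpotent_r mul z.
Proof.
move=> idJ nilI nilJ _ [i [j [/nilI [n in0] Jj ->]]].
have : J (npow mul (i + j) n - npow mul i n) by apply: ideal_npowB; rewrite // addrC addKr.
rewrite in0 subr0 => /nilJ [m zm0].
by exists (n * m + n + m)%N; rewrite -npow_npow.
Qed.

Lemma ideal_gen_nil S :
  (forall s, S s -> forall z, ideal_gen mul (eq s) z -> nilpotent_r mul z) ->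
  forall z, ideal_gen mul S z -> nilpotent_r mul z.
Proof.
move=> nilS.
suff in_nil_ideal z : ideal_gen mul S z ->
    exists J, [/\ is_ideal J, forall x, J x -> nilpotent_r mul x & J z].
  by move=> z /in_nil_ideal [J [_ nilJ /nilJ]].
elim=> {z} [s Ss| |x y _ [I [idI nilI Ix]] _ [J [idJ nilJ Jy]]
           |r x _ [J [idJ nilJ Jx]]|x r _ [J [idJ nilJ Jx]]].
- exists (ideal_gen mul (eq s)).
  by split; [exact: ideal_gen_ideal | exact: nilS | exact: ig_gen].
- by exists (fun x => x = 0); split=> [|x ->|//]; [exact: zero_ideal | exists 0%N].
- exists (ideal_add I J); split; [exact: ideal_add_ideal | exact: nil_ideal_add |].
  by exists x, (- y); split=> //; exact: idealN.
- by exists J; split=> //; exact: idealMl.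
- by exists J; split=> //; exact: idealMr.
Qed.

Definition sandwich (S1 S2 : R -> Prop) z :=
  exists s1 s2, [/\ S1 s1, S2 s2 & z = s1 * s2 \/ exists x, z = s1 * (x * s2)].

Lemma ideal_gen_mul S1 S2 z1 z2 : ideal_gen mul S1 z1 -> ideal_gen mul S2 z2 ->
  ideal_gen mul (sandwich S1 S2) (z1 * z2).
Proof.
set J := ideal_gen mul (sandwich S1 S2); have idJ : is_ideal J := ideal_gen_ideal _.
have gen_mul s1 : S1 s1 ->
    forall z, ideal_gen mul S2 z -> J (s1 * z) /\ forall x, J (s1 * (x * z)).
  move=> S1s1; apply: ideal_gen_min => [|s2 S2s2]; last first.
    by split=> [|x]; apply: ig_gen; exists s1, s2; split=> //; [left | right; exists x].
  split.
  - by rewrite rng_mul0r; split=> [|x]; rewrite ?rng_mul0r; exact: ideal0.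
  - move=> y1 y2 [J1 J1x] [J2 J2x]; rewrite rng_mulBr; split=> [|x]; first exact: idealB.
    by rewrite rng_mulBr rng_mulBr; apply: idealB.
  - move=> r y [_ Jx]; split=> [|x]; first exact: Jx.
    by rewrite (mulA x); apply: Jx.
  - move=> y r [Jy Jx]; split=> [|x]; first by rewrite mulA; exact: idealMr.
    by rewrite (mulA x) mulA; exact: idealMr.
move=> Sz1 Sz2; move: z1 Sz1 z2 Sz2.
apply: ideal_gen_min => [|s1 S1s1 z /(gen_mul _ S1s1) []//]; split.
- by move=> z2 _; rewrite rng_mul0l; exact: ideal0.
- by move=> y1 y2 J1 J2 z2 Sz2; rewrite rng_mulBl; apply: (idealB idJ); [apply: J1 | apply: J2].
- by move=> r y Jy z2 Sz2; rewrite -mulA; apply: (idealMl idJ); apply: Jy.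
- move=> y r Jy z2 Sz2; rewrite -mulA; apply: Jy.
  exact: idealMl (ideal_gen_ideal _) _ _ Sz2.
Qed.

Lemma comm_mulE x y z : [x, y] * z = x * (y * z) - y * (x * z).
Proof. by rewrite rng_mulBl -!mulA. Qed.

Lemma comm_mul_eq0 a c P : c * P = P * c -> (a * c) * P = P * (a * c) -> [a, P] * c = 0.
Proof. by move=> cP acP; rewrite rng_mulBl -!mulA -cP mulA acP subrr. Qed.

Lemma metabelian_comm_eq0 :
  (let C := commS mul (allR (R:=R)) (allR (R:=R)) in
   forall z, commS mul C (prodS mul C C) z -> z = 0) ->
  forall x1 x2 x3 x4 x5 x6, [[x1, x2], [x3, x4] * [x5, x6]] = 0.
Proof.
move=> hyp x1 x2 x3 x4 x5 x6; apply: hyp; apply: asg_gen.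
have C_comm x y : commS mul (allR (R:=R)) (allR (R:=R)) [x, y].
  by apply: asg_gen; exists x, y.
exists [x1, x2], ([x3, x4] * [x5, x6]); split; first exact: C_comm.
split=> //; apply: asg_gen; exists [x3, x4], [x5, x6].
by split; [|split]; try exact: C_comm.
Qed.

Section Metabelian.
Hypothesis Hmeta : forall x1 x2 x3 x4 x5 x6, [[x1, x2], [x3, x4] * [x5, x6]] = 0.

Lemma comm_commute_prod x1 x2 x3 x4 x5 x6 :
  [x1, x2] * ([x3, x4] * [x5, x6]) = ([x3, x4] * [x5, x6]) * [x1, x2].
Proof. by apply/eqP; rewrite -subr_eq0; apply/eqP; exact: Hmeta. Qed.

Lemma comm_prod_mul_comm a w x1 x2 x3 x4 : [a, [x1, x2] * [x3, x4]] * [a, w] = 0.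
Proof.
apply: comm_mul_eq0; first exact: comm_commute_prod.
have := comm_commute_prod a (a * w) x1 x2 x3 x4.
by rewrite commMr comm_refl rng_mul0l add0r.
Qed.

Section OneCommutator.
Variables a b : R.
Local Notation u := [a, b].

Lemma comm_sq_sq_eq0 : (u * u) * (u * u) = 0.
Proof.
have d_u : [a, u * u] * u = 0 := comm_prod_mul_comm a b a b a b.
have d_bu : [a, u * u] * (b * u) = 0.
  have := comm_prod_mul_comm a (b * b) a b a b.
  by rewrite (commMr a b b) mulDr mulA d_u rng_mul0l add0r.
(* u^4 = - [a, u^2] b u  and  [a, u^2] b u = [a, u^2] ([a, b^2] - u b) = 0 *)
have := comm_prod_mul_comm a b a b (a * b) b.
rewrite (commMl a b b) comm_refl rng_mul0r add0r mulA (commMr a (u * u) b).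
by rewrite mulDl -mulA d_bu add0r mulA.
Qed.

Lemma comm_sq_mul_sq_eq0 g : (u * u) * (g * (u * u)) = 0.
Proof.
have u4 : u * (u * (u * u)) = 0 by rewrite mulA comm_sq_sq_eq0.
have gu : g * u = [a, g * b] - [a, g] * b by rewrite (commMr a g b) addrC addKr.
have bu : b * (u * (u * u)) - u * (u * (b * u)) = 0.
  have := comm_prod_mul_comm b a a b a b.
  rewrite (comm_anti a b) rng_mulNr comm_mulE -!mulA => /eqP.
  by rewrite oppr_eq0 => /eqP.
(* g u = [a, g b] - [a, g] b turns u^2 g u^2 into [a, g] [b, u^2] u, modulo u^4 = 0 *)
rewrite (mulA g u u) gu (rng_mulBl [a, g * b]) (rng_mulBr (u * u)) !mulA.
rewrite -(comm_commute_prod a (g * b) a b a b) -(comm_commute_prod a g a b a b).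
by rewrite (commMr a g b) mulDl -!mulA mulDl -!mulA u4 rng_mul0r addr0 -rng_mulBr bu rng_mul0r.
Qed.

Lemma comm_sandwich x y : u * ([x, y] * u) = (u * u) * [x, y].
Proof. by rewrite -mulA (comm_commute_prod a b a b x y) -mulA. Qed.

Lemma comm_mul_sandwich x X : u * (x * (X * u)) = (u * u) * [x, X] + (u * X) * (x * u).
Proof.
have xX : x * X = [x, X] + X * x by rewrite /comm_r subrK.
by rewrite (mulA x X u) xX mulDl mulDr comm_sandwich -(mulA X x u) (mulA u X).
Qed.

Lemma sandwich_cube_sq z :
  sandwich (eq u) (sandwich (eq u) (eq u)) z -> ideal_gen mul (eq (u * u)) z.
Proof.
have idW := ideal_gen_ideal (eq (u * u)).
have Wuu y : ideal_gen mul (eq (u * u)) ((u * u) * y) by apply: (idealMr idW); apply: ig_gen.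
move=> [_ [_ [<- [_ [_ [<- <- [-> | [y ->]]]]] [-> | [x ->]]]]].
- by rewrite mulA.
- by rewrite comm_mul_sandwich; apply: idealD.
- by rewrite mulA.
- rewrite (mulA u y u) comm_mul_sandwich (mulA u u y) -(mulA (u * u) y).
  by apply: idealD.
Qed.

Lemma comm_principal_nil z : ideal_gen mul (eq u) z -> npow mul z 5 = 0.
Proof.
move=> Iz.
have Iz3 : ideal_gen mul (eq (u * u)) (z * (z * z)).
  apply: ideal_gen_min (ideal_gen_ideal _) sandwich_cube_sq _ _.
  exact: ideal_gen_mul Iz (ideal_gen_mul Iz Iz).
have <- : npow mul z 2 * npow mul z 2 = npow mul z 5 := npow_add z 2 2.
apply: ideal_gen_min zero_ideal _ _ (ideal_gen_mul Iz3 Iz3).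
by move=> _ [_ [_ [<- <- [-> | [x ->]]]]]; [exact: comm_sq_sq_eq0 | exact: comm_sq_mul_sq_eq0].
Qed.

End OneCommutator.
End Metabelian.
End Rng.

Unset Implicit Arguments.
Theorem corollary2p4 (R : zmodType) (mul : R -> R -> R) (Hrng : is_rng mul) :
  (let C := commS mul (allR (R:=R)) (allR (R:=R)) in
   forall z, commS mul C (prodS mul C C) z -> z = 0) ->
  forall z, comm_ideal mul z -> nilpotent_r mul z.
Proof.
move=> hyp; apply: ideal_gen_nil => // _ [a [b ->]] z Iz.
by exists 5%N; apply: comm_principal_nil Iz; [exact: Hrng | exact: metabelian_comm_eq0].
Qed.
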